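(* Let $A,B$ be non-trivial finitely generated left-orderable groups. Then $G=A*B$ is Hucha with respect to the family consisting of $A$, $B$ and all cyclic subgroups of $G$.
   Context: A positive cone is a subsemigroup $P$ with $G=P\sqcup P^{-1}\sqcup\{1\}$. For a finite generating set $X$ with word metric $d_X$, an $r$-path is a sequence $g_0,\dots,g_n$ with $d_X(g_i,g_{i+1})\le r$; $S$ $r$-disconnects $H_1,H_2$ if every $r$-path from $H_1$ to $H_2$ meets $S$, and $r$-disconnects $P$ if it $r$-disconnects $\{u\},\{v\}$ for some $u,v\in P$. A negative swamp of width $r$ for a subgroup $H$ is $S\subseteq P^{-1}$ that $r$-disconnects $P$ and $r$-disconnects $g_1H,g_2H$ for some $g_1,g_2\in G$. A finitely generated left-orderable group $G$ is Hucha with respect to a family $\mathcal{H}$ of subgroups if for some (equivalently any) finite generating set, for every positive cone $P$, every $H\in\mathcal{H}$ and every $r>0$ there is a negative swamp of width $r$ for $H$. *)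

From Stdlib Require Import List.
Import ListNotations.

Set Implicit Arguments.
Unset Strict Implicit.

Record group := Group {
  carrier :> Type;
  mul : carrier -> carrier -> carrier;
  inv : carrier -> carrier;
  one : carrier;
  mulA : forall x y z, mul x (mul y z) = mul (mul x y) z;
  mul1g : forall x, mul one x = x;
  mulg1 : forall x, mul x one = x;
  mulVg : forall x, mul (inv x) x = one;
  mulgV : forall x, mul x (inv x) = one
}.

Arguments mul {g}.
Arguments inv {g}.
Arguments one {g}.

Definition is_hom (G H : group) (f : G -> H) : Prop :=
  forall x y : G, f (mul x y) = mul (f x) (f y).

Fixpoint prodw (G : group) (w : list G) : G :=
  match w with
  | nil => one
  | x :: w' => mul x (@prodw G w')
  end.

Definition letter (G : group) (X : list G) (a : G) : Prop :=
  In a X \/ exists x, In x X /\ a = inv x.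

Definition generates (G : group) (X : list G) : Prop :=
  forall g : G, exists w : list G, Forall (letter X) w /\ prodw w = g.

Definition finitely_generated (G : group) : Prop :=
  exists X : list G, generates X.

Definition nontrivial (G : group) : Prop := exists a : G, a <> one.

Definition positive_cone (G : group) (P : G -> Prop) : Prop :=
  (forall x y, P x -> P y -> P (mul x y)) /\
  (forall g : G,
     (P g /\ ~ P (inv g) /\ g <> one) \/
     (~ P g /\ P (inv g) /\ g <> one) \/
     (~ P g /\ ~ P (inv g) /\ g = one)).

Definition left_orderable (G : group) : Prop :=
  exists P : G -> Prop, positive_cone P.

(** word metric: d_X(g,h) <= r  iff  g^{-1} h is a product of at most r
    letters from X ∪ X^{-1} *)
Definition dist_le (G : group) (X : list G) (r : nat) (g h : G) : Prop :=
  exists w : list G, Forall (letter X) w /\ length w <= r /\ mul g (prodw w) = h.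

Fixpoint chain (T : Type) (R : T -> T -> Prop) (x : T) (l : list T) : Prop :=
  match l with
  | nil => True
  | y :: l' => R x y /\ @chain T R y l'
  end.

Definition r_disconnects (G : group) (X : list G) (r : nat)
  (S H1 H2 : G -> Prop) : Prop :=
  forall (x : G) (l : list G),
    H1 x -> H2 (last l x) -> chain (dist_le X r) x l ->
    S x \/ Exists S l.

Definition r_disconnects_cone (G : group) (X : list G) (r : nat)
  (S P : G -> Prop) : Prop :=
  exists u v : G, P u /\ P v /\
    r_disconnects X r S (fun g => g = u) (fun g => g = v).

Definition lcoset (G : group) (g : G) (H : G -> Prop) : G -> Prop :=
  fun x => exists h, H h /\ x = mul g h.

Definition negative_swamp (G : group) (X : list G) (P : G -> Prop)
  (H : G -> Prop) (r : nat) (S : G -> Prop) : Prop :=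
  (forall s, S s -> P (inv s)) /\
  r_disconnects_cone X r S P /\
  exists g1 g2 : G, r_disconnects X r S (lcoset g1 H) (lcoset g2 H).

Definition Hucha (G : group) (Fam : (G -> Prop) -> Prop) : Prop :=
  forall X : list G, generates X ->
  forall P : G -> Prop, positive_cone P ->
  forall H : G -> Prop, Fam H ->
  forall r : nat, 0 < r ->
  exists S : G -> Prop, negative_swamp X P H r S.

Definition is_free_product (A B G : group) (iA : A -> G) (iB : B -> G) : Prop :=
  is_hom iA /\ is_hom iB /\
  forall (K : group) (f : A -> K) (g : B -> K), is_hom f -> is_hom g ->
    (exists h : G -> K, is_hom h /\ (forall a, h (iA a) = f a) /\
                        (forall b, h (iB b) = g b)) /\
    (forall h1 h2 : G -> K, is_hom h1 -> is_hom h2 ->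
       (forall a, h1 (iA a) = f a) -> (forall b, h1 (iB b) = g b) ->
       (forall a, h2 (iA a) = f a) -> (forall b, h2 (iB b) = g b) ->
       forall x, h1 x = h2 x).

Fixpoint expn (G : group) (g : G) (n : nat) : G :=
  match n with O => one | S n' => mul g (@expn G g n') end.

Definition cyclic_subgroup (G : group) (g : G) : G -> Prop :=
  fun x => exists n : nat, x = expn g n \/ x = inv (expn g n).

Definition image (T : Type) (G : group) (f : T -> G) : G -> Prop :=
  fun x => exists t, x = f t.

Definition same_set (G : group) (H K : G -> Prop) : Prop := forall x, H x <-> K x.

Definition free_prod_family (A B G : group) (iA : A -> G) (iB : B -> G)
  (H : G -> Prop) : Prop :=
  same_set H (image iA) \/ same_set H (image iB) \/
  exists g : G, same_set H (cyclic_subgroup g).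

(* Reduced words are normal forms in [A * B]; the action of [G] on them comes from
   the universal property (van der Waerden's trick).  Let [Z] be the set of elements
   whose normal form starts with a syllable of [A].  If [z] is in [Z] but [z y] is not,
   then [z^-1] is a prefix of the normal form of [y], so the points of [Z] with an
   [r]-neighbour outside [Z] form a finite set [F].  Given a positive cone, take [t]
   above every element of [F] in the left order: then [t^-1 F] is negative and
   [r]-disconnects [t^-1 Z] from its complement.  Both sides meet the cone, and for
   [H] = [A], [B] or a cyclic subgroup, some left coset of [H] lies in [Z] and another
   outside it.  For [<c>] this holds because all nontrivial powers of [c] have normal
   forms starting with the first syllable of [c] or of [c^-1], which uses that [A] and
   [B] are torsion-free, as left-orderable groups are. *)

From Stdlib Require Import List Arith Lia Classical ClassicalEpsilon
  ProofIrrelevance FunctionalExtensionality.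
Import ListNotations.

Section GroupTheory.
Context {G : group}.
Implicit Types x y z : G.

Lemma mulKg x y : mul (inv x) (mul x y) = y.
Proof. rewrite mulA, mulVg, mul1g; reflexivity. Qed.

Lemma mulKVg x y : mul x (mul (inv x) y) = y.
Proof. rewrite mulA, mulgV, mul1g; reflexivity. Qed.

Lemma mulgI x y z : mul x y = mul x z -> y = z.
Proof. intro E. rewrite <- (mulKg x y), E, mulKg; reflexivity. Qed.

Lemma mulIg x y z : mul y x = mul z x -> y = z.
Proof.
  intro E. rewrite <- (mulg1 y), <- (mulgV x), mulA, E, <- mulA, mulgV, mulg1.
  reflexivity.
Qed.

Lemma invgK x : inv (inv x) = x.
Proof. apply (mulgI (inv x)). rewrite mulgV, mulVg; reflexivity. Qed.

Lemma invMg x y : inv (mul x y) = mul (inv y) (inv x).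
Proof.
  apply (mulgI (mul x y)).
  rewrite mulgV, <- mulA, (mulA y), mulgV, mul1g, mulgV; reflexivity.
Qed.

Lemma invg1 : inv (@one G) = one.
Proof. rewrite <- (mul1g (inv one)), mulgV; reflexivity. Qed.

Lemma mulgK x y : mul (mul y x) (inv x) = y.
Proof. rewrite <- mulA, mulgV, mulg1; reflexivity. Qed.

Lemma mulg_eq1 x y : mul x y = one -> x = inv y.
Proof. intro E. apply (mulIg y). rewrite E, mulVg; reflexivity. Qed.

Lemma invg_eq1 x : inv x = one -> x = one.
Proof. intro E. rewrite <- (invgK x), E, invg1; reflexivity. Qed.

Lemma conjg_eq1 c x : mul (inv x) (mul c x) = one -> c = one.
Proof.
  intro E. apply (mulIg x). rewrite mul1g. apply (mulgI (inv x)).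
  rewrite E, mulVg; reflexivity.
Qed.

Lemma expnSr x n : expn x (S n) = mul (expn x n) x.
Proof.
  induction n as [|n IH]; simpl in *.
  - rewrite mulg1, mul1g; reflexivity.
  - rewrite IH at 1. rewrite mulA; reflexivity.
Qed.

Lemma expnD x m n : expn x (m + n) = mul (expn x m) (expn x n).
Proof.
  induction m as [|m IH]; simpl.
  - rewrite mul1g; reflexivity.
  - rewrite IH, mulA; reflexivity.
Qed.

Lemma expn1g n : expn (@one G) n = one.
Proof. induction n as [|n IH]; simpl; [|rewrite IH, mulg1]; reflexivity. Qed.

Lemma expnV x n : expn (inv x) n = inv (expn x n).
Proof.
  induction n as [|n IH].
  - simpl. rewrite invg1; reflexivity.
  - rewrite expnSr. simpl. rewrite invMg, IH; reflexivity.
Qed.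

Lemma expn_conjg x e n :
  expn (mul x (mul e (inv x))) n = mul x (mul (expn e n) (inv x)).
Proof.
  induction n as [|n IH]; simpl.
  - rewrite mul1g, mulgV; reflexivity.
  - rewrite IH, !mulA. f_equal. rewrite <- !mulA. do 2 f_equal.
    rewrite mulA, mulVg, mul1g; reflexivity.
Qed.

Lemma expn_infinite_order_avoid x0 x1 x2 :
  (forall n, expn x0 (S n) <> one) -> exists x, x <> one /\ x <> x1 /\ x <> x2.
Proof.
  intros Hne.
  assert (Hpow : forall m n, m < n -> expn x0 (S m) <> expn x0 (S n)).
  { intros m n lt E. apply (Hne (n - m - 1)). apply (mulgI (expn x0 (S m))).
    rewrite <- expnD, mulg1. replace (S m + S (n - m - 1)) with (S n) by lia.
    symmetry; exact E. }
  destruct (classic (expn x0 1 = x1 \/ expn x0 1 = x2)) as [E1|E1];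
    [|exists (expn x0 1); split; [apply Hne|tauto]].
  destruct (classic (expn x0 2 = x1 \/ expn x0 2 = x2)) as [E2|E2];
    [|exists (expn x0 2); split; [apply Hne|tauto]].
  destruct (classic (expn x0 3 = x1 \/ expn x0 3 = x2)) as [E3|E3];
    [|exists (expn x0 3); split; [apply Hne|tauto]].
  exfalso. pose proof (Hpow 0 1) as D01. pose proof (Hpow 0 2) as D02.
  pose proof (Hpow 1 2) as D12.
  destruct E1 as [E1|E1], E2 as [E2|E2], E3 as [E3|E3]; subst;
    [apply D01|apply D01|apply D02|apply D12|apply D12|apply D02|apply D01|apply D01];
    auto; lia.
Qed.

End GroupTheory.

Definition torsion_free (G : group) : Prop :=
  forall x : G, x <> one -> forall n, expn x (S n) <> one.

Section Homomorphisms.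
Context {G K : group} (f : G -> K) (hom_f : is_hom f).

Lemma hom1 : f one = one.
Proof. apply (mulgI (f one)). rewrite <- hom_f, !mulg1; reflexivity. Qed.

Lemma homV x : f (inv x) = inv (f x).
Proof.
  apply (mulgI (f x)). rewrite <- hom_f, !mulgV. exact hom1.
Qed.

Lemma hom_expn x n : f (expn x n) = expn (f x) n.
Proof. induction n as [|n IH]; simpl; [exact hom1|rewrite hom_f, IH; reflexivity]. Qed.

End Homomorphisms.

Section PositiveCone.
Context {G : group} {P : G -> Prop} (coneP : positive_cone P).

Lemma cone_mul x y : P x -> P y -> P (mul x y).
Proof. apply (proj1 coneP). Qed.

Lemma cone_not1 : ~ P one.
Proof. destruct (proj2 coneP one) as [(_&_&H)|[(H&_)|(H&_)]]; tauto. Qed.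

Lemma cone_total x : x <> one -> P x \/ P (inv x).
Proof. destruct (proj2 coneP x) as [(H&_)|[(_&H&_)|(_&_&H)]]; tauto. Qed.

Lemma cone_torsion_free : torsion_free G.
Proof.
  assert (Hpow : forall x, P x -> forall n, P (expn x (S n))).
  { intros x Px n. induction n as [|n IH]; simpl in *.
    - rewrite mulg1; exact Px.
    - apply cone_mul; assumption. }
  intros x nt n E. apply cone_not1.
  destruct (cone_total x nt) as [Px|Px].
  - rewrite <- E. apply Hpow, Px.
  - rewrite <- invg1, <- E, <- expnV. apply Hpow, Px.
Qed.

(* An upper bound of [l] for the left order [x < y <-> P (x^-1 y)]. *)
Lemma cone_upper_bound (l : list G) : (exists p, P p) ->
  exists t, forall q, In q l -> P (mul (inv q) t).
Proof.
  intros [p Pp]. induction l as [|a l [t Ht]]; [exists one; simpl; tauto|].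
  destruct (classic (mul (inv a) t = one)) as [E|E].
  - exists (mul t p). intros q [<-|Hq]; rewrite mulA.
    + rewrite E, mul1g; exact Pp.
    + apply cone_mul; auto.
  - destruct (cone_total _ E) as [Pat|Pta]; [exists t; intros q [<-|Hq]; auto|].
    rewrite invMg, invgK in Pta. exists (mul a p). intros q [<-|Hq].
    + rewrite mulKg; exact Pp.
    + replace (mul (inv q) (mul a p)) with (mul (mul (inv q) t) (mul (mul (inv t) a) p))
        by (rewrite <- (mulA (inv t)), <- (mulA (inv q) t), mulKVg; reflexivity).
      apply cone_mul; [auto|apply cone_mul; assumption].
Qed.

Lemma cone_translate_into (Z : G -> Prop) (c t : G) :
  (exists p, P p) -> c <> one ->
  (forall x, ~ Z x -> Z (mul c x) /\ Z (mul (inv c) x)) ->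
  exists z, Z z /\ P (mul (inv t) z).
Proof.
  intros [p Pp] nt HZ. set (x := mul t p).
  assert (Px : P (mul (inv t) x)) by (unfold x; rewrite mulKg; exact Pp).
  destruct (classic (Z x)) as [Zx|Zx]; [exists x; auto|].
  destruct (HZ x Zx) as [Zcx Zcx'].
  (* [t^-1 (c^{+-1} x) = (t^-1 x) (x^-1 c^{+-1} x)], and one of the two conjugates
     is positive. *)
  assert (Hsplit : forall d, mul (inv t) (mul d x) = mul (mul (inv t) x) (mul (inv x) (mul d x)))
    by (intro d; rewrite <- mulA, mulKVg; reflexivity).
  assert (nt' : mul (inv x) (mul c x) <> one) by (intro E; apply nt, (conjg_eq1 _ _ E)).
  destruct (cone_total _ nt') as [Pc|Pc].
  - exists (mul c x). split; [exact Zcx|]. rewrite Hsplit. apply cone_mul; assumption.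
  - exists (mul (inv c) x). split; [exact Zcx'|]. rewrite Hsplit.
    apply cone_mul; [assumption|].
    rewrite !invMg, invgK, <- mulA in Pc. exact Pc.
Qed.

End PositiveCone.

Lemma last_cons_default {T : Type} (y d : T) (l : list T) : last (y :: l) d = last l y.
Proof.
  revert y d. induction l as [|z l IH]; intros y d; [reflexivity|].
  change (last (z :: l) d = last (z :: l) y). rewrite (IH z d), (IH z y). reflexivity.
Qed.

Section WordMetric.
Context {G : group} (X : list G) (r : nat).

Lemma r_disconnects_boundary (Z S H1 H2 : G -> Prop) :
  (forall x x', Z x -> ~ Z x' -> dist_le X r x x' -> S x) ->
  (forall x, H1 x -> Z x) -> (forall x, H2 x -> ~ Z x) -> r_disconnects X r S H1 H2.
Proof.
  intros Hb H1Z H2Z x l H1x H2l Ch. apply H1Z in H1x. apply H2Z in H2l.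
  revert x H1x H2l Ch. induction l as [|y l IH]; [intros x Zx NZx _; contradiction|].
  intros x Zx NZl [Dxy Ch].
  rewrite last_cons_default in NZl.
  destruct (classic (Z y)) as [Zy|NZy].
  - right. destruct (IH y Zy NZl Ch); [apply Exists_cons_hd|apply Exists_cons_tl]; assumption.
  - left. exact (Hb x y Zx NZy Dxy).
Qed.

Definition letters : list G := X ++ map inv X.

Fixpoint words (n : nat) : list (list G) :=
  match n with
  | 0 => [[]]
  | S n' => [] :: flat_map (fun a => map (cons a) (words n')) letters
  end.

Lemma in_words n w : Forall (letter X) w -> length w <= n -> In w (words n).
Proof.
  revert w. induction n as [|n IH]; intros w Fw Lw.
  - destruct w; simpl in *; [auto|lia].
  - destruct w as [|a w]; simpl; [auto|right].
    inversion Fw as [|? ? La Fw']; subst. apply in_flat_map. exists a. split.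
    + unfold letters. apply in_app_iff. destruct La as [I|[x [I ->]]]; [left; exact I|].
      right. apply in_map, I.
    + apply in_map, IH; [exact Fw'|simpl in Lw; lia].
Qed.

Definition ball : list G := map (@prodw G) (words r).

Lemma dist_le_ball x x' : dist_le X r x x' -> In (mul (inv x) x') ball.
Proof.
  intros [w (Fw & Lw & <-)]. rewrite mulKg. apply in_map, in_words; assumption.
Qed.

End WordMetric.

Section SymmetricGroup.
Variable T : Type.

Record perm := Perm {
  perm_fun :> T -> T;
  perm_inv : T -> T;
  perm_funK : forall x, perm_inv (perm_fun x) = x;
  perm_invK : forall x, perm_fun (perm_inv x) = x
}.

Lemma perm_ext (p q : perm) : (forall x, p x = q x) -> p = q.
Proof.
  destruct p as [f fi fK fiK], q as [g gi gK giK]; simpl. intros E.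
  assert (f = g) by (extensionality x; apply E). subst g.
  assert (fi = gi).
  { extensionality y. rewrite <- (fiK y) at 2. rewrite gK; reflexivity. }
  subst gi. f_equal; apply proof_irrelevance.
Qed.

Definition perm_comp (p q : perm) : perm.
Proof.
  refine (Perm (fun x => p (q x)) (fun x => perm_inv q (perm_inv p x)) _ _); intro x.
  - rewrite !perm_funK; reflexivity.
  - rewrite !perm_invK; reflexivity.
Defined.

Definition perm_rev (p : perm) : perm := @Perm (perm_inv p) p (perm_invK p) (perm_funK p).

Definition perm_id : perm := @Perm (fun x => x) (fun x => x) (@eq_refl T) (@eq_refl T).

Definition Sym : group.
Proof.
  refine (@Group perm perm_comp perm_rev perm_id _ _ _ _ _); intros;
    apply perm_ext; intro; simpl; try reflexivity.
  - apply perm_funK.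
  - apply perm_invK.
Defined.

End SymmetricGroup.

Section Subgroup.
Context {G : group} (Q : G -> Prop) (Q1 : Q one)
  (QM : forall x y, Q x -> Q y -> Q (mul x y)) (QV : forall x, Q x -> Q (inv x)).

Definition subgroup_elt := {x : G | Q x}.

Lemma subgroup_elt_eq (x y : subgroup_elt) : proj1_sig x = proj1_sig y -> x = y.
Proof. destruct x, y; simpl; intros; subst; f_equal; apply proof_irrelevance. Qed.

Definition subgroup : group.
Proof.
  refine (@Group subgroup_elt
    (fun x y => exist _ (mul (proj1_sig x) (proj1_sig y)) (QM _ _ (proj2_sig x) (proj2_sig y)))
    (fun x => exist _ (inv (proj1_sig x)) (QV _ (proj2_sig x)))
    (exist _ one Q1) _ _ _ _ _); intros; apply subgroup_elt_eq; simpl.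
  - apply mulA.
  - apply mul1g.
  - apply mulg1.
  - apply mulVg.
  - apply mulgV.
Defined.

End Subgroup.

Section FreeProductUniversal.
Context {A B G : group} {iA : A -> G} {iB : B -> G} (free : is_free_product iA iB).

Lemma free_hom_iA : is_hom iA.
Proof. exact (proj1 free). Qed.

Lemma free_hom_iB : is_hom iB.
Proof. exact (proj1 (proj2 free)). Qed.

Lemma free_product_lift (K : group) (f : A -> K) (g : B -> K) :
  is_hom f -> is_hom g ->
  {h : G -> K | is_hom h /\ (forall a, h (iA a) = f a) /\ (forall b, h (iB b) = g b)}.
Proof.
  intros hf hg. apply constructive_indefinite_description.
  exact (proj1 (proj2 (proj2 free) K f g hf hg)).
Qed.

(* A subgroup containing both factors is everything: lift [iA], [iB] into the
   subgroup and compare with the identity using uniqueness of lifts. *)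
Lemma free_product_ind (Q : G -> Prop) (Q1 : Q one)
  (QM : forall x y, Q x -> Q y -> Q (mul x y)) (QV : forall x, Q x -> Q (inv x)) :
  (forall a, Q (iA a)) -> (forall b, Q (iB b)) -> forall g, Q g.
Proof.
  intros QA QB.
  pose (S := subgroup Q Q1 QM QV).
  pose (sA := fun a => exist Q (iA a) (QA a) : S).
  pose (sB := fun b => exist Q (iB b) (QB b) : S).
  assert (hA : is_hom sA) by (intros x y; apply subgroup_elt_eq, free_hom_iA).
  assert (hB : is_hom sB) by (intros x y; apply subgroup_elt_eq, free_hom_iB).
  destruct (free_product_lift S sA sB hA hB) as [h (hh & hiA & hiB)].
  assert (E : forall g, proj1_sig (h g) = g).
  { apply (proj2 (proj2 (proj2 free) G iA iB free_hom_iA free_hom_iB)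
      (fun g => proj1_sig (h g)) (fun g => g)).
    - intros x y. rewrite hh; reflexivity.
    - intros x y; reflexivity.
    - intro a. rewrite hiA; reflexivity.
    - intro b. rewrite hiB; reflexivity.
    - reflexivity.
    - reflexivity. }
  intro g. rewrite <- (E g). apply proj2_sig.
Qed.

End FreeProductUniversal.

Section ReducedWords.
Context {A B : group}.

Definition syllable : Type := (A + B)%type.
Implicit Types s t : syllable.
Implicit Types u v w : list syllable.

Definition syl_nontrivial s : Prop :=
  match s with inl a => a <> one | inr b => b <> one end.

Definition same_factor s t : Prop :=
  match s, t with inl _, inl _ | inr _, inr _ => True | _, _ => False end.

(* Only meaningful for syllables of the same factor. *)
Definition syl_mul s t : syllable :=
  match s, t with
  | inl x, inl y => inl (mul x y)
  | inr x, inr y => inr (mul x y)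
  | _, _ => s
  end.

Definition syl_inv s : syllable :=
  match s with inl a => inl (inv a) | inr b => inr (inv b) end.

Definition syl_pow s n : syllable :=
  match s with inl a => inl (expn a n) | inr b => inr (expn b n) end.

Definition syl_precedes s w : Prop :=
  match w with [] => True | t :: _ => ~ same_factor s t end.

Fixpoint reduced w : Prop :=
  match w with
  | [] => True
  | s :: w' => syl_nontrivial s /\ syl_precedes s w' /\ reduced w'
  end.

Lemma same_factor_dec s t : {same_factor s t} + {~ same_factor s t}.
Proof. destruct s, t; simpl; auto. Qed.

Lemma same_factor_sym s t : same_factor s t -> same_factor t s.
Proof. destruct s, t; simpl; tauto. Qed.

Lemma same_factor_trans s t s' : same_factor s t -> same_factor t s' -> same_factor s s'.
Proof. destruct s, t, s'; simpl; tauto. Qed.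

Lemma same_factor_mul s t : same_factor (syl_mul s t) s.
Proof. destruct s, t; simpl; auto. Qed.

Lemma same_factor_inv s : same_factor (syl_inv s) s.
Proof. destruct s; simpl; auto. Qed.

Lemma same_factor_pow s n : same_factor (syl_pow s n) s.
Proof. destruct s; simpl; auto. Qed.

Lemma syl_mulA s t s' : same_factor s t -> same_factor t s' ->
  syl_mul s (syl_mul t s') = syl_mul (syl_mul s t) s'.
Proof. destruct s, t, s'; simpl; try tauto; rewrite mulA; reflexivity. Qed.

Lemma syl_mul_trivial_r s t : same_factor s t -> ~ syl_nontrivial t -> syl_mul s t = s.
Proof.
  destruct s, t; simpl; try tauto; intros _ E; apply NNPP in E; subst;
    rewrite mulg1; reflexivity.
Qed.

Lemma syl_mul_trivial_l s t : same_factor s t -> ~ syl_nontrivial s -> syl_mul s t = t.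
Proof.
  destruct s, t; simpl; try tauto; intros _ E; apply NNPP in E; subst;
    rewrite mul1g; reflexivity.
Qed.

Lemma syl_mulV s : ~ syl_nontrivial (syl_mul s (syl_inv s)).
Proof. destruct s; simpl; rewrite mulgV; tauto. Qed.

Lemma syl_mulVl s : ~ syl_nontrivial (syl_mul (syl_inv s) s).
Proof. destruct s; simpl; rewrite mulVg; tauto. Qed.

Lemma syl_nontrivial_inv s : syl_nontrivial s -> syl_nontrivial (syl_inv s).
Proof. destruct s; simpl; intros H E; apply H, invg_eq1, E. Qed.

Lemma syl_precedes_same_factor s s' w :
  same_factor s s' -> syl_precedes s w -> syl_precedes s' w.
Proof.
  destruct w as [|t w]; simpl; auto. intros E H F.
  apply H, (same_factor_trans _ _ _ E F).
Qed.

Definition push s w : list syllable :=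
  if excluded_middle_informative (syl_nontrivial s) then s :: w else w.

(* Left multiplication of a reduced word by a syllable: merge with the first
   syllable when both lie in the same factor, cancelling it if the product is 1. *)
Definition act s w : list syllable :=
  match w with
  | t :: w' => if same_factor_dec s t then push (syl_mul s t) w' else push s w
  | [] => push s []
  end.

Lemma act_same s t w : same_factor s t -> act s (t :: w) = push (syl_mul s t) w.
Proof. simpl. destruct same_factor_dec; tauto. Qed.

Lemma act_other s t w : ~ same_factor s t -> act s (t :: w) = push s (t :: w).
Proof. simpl. destruct same_factor_dec; tauto. Qed.

Lemma act_precedes s w : syl_precedes s w -> act s w = push s w.
Proof. destruct w as [|t w]; [reflexivity|apply act_other]. Qed.

Lemma push_trivial s w : ~ syl_nontrivial s -> push s w = w.
Proof. unfold push. destruct excluded_middle_informative; tauto. Qed.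

Lemma push_nontrivial s w : syl_nontrivial s -> push s w = s :: w.
Proof. unfold push. destruct excluded_middle_informative; tauto. Qed.

Lemma reduced_push s w : reduced w -> syl_precedes s w -> reduced (push s w).
Proof. unfold push. destruct excluded_middle_informative; simpl; tauto. Qed.

Lemma reduced_act s w : reduced w -> reduced (act s w).
Proof.
  intros Rw. destruct w as [|t w']; [apply reduced_push; simpl; auto|].
  destruct (same_factor_dec s t) as [st|st].
  - rewrite act_same by exact st. destruct Rw as (_ & Pt & Rw').
    apply reduced_push; [exact Rw'|].
    apply (syl_precedes_same_factor t); [|exact Pt].
    apply same_factor_sym, (same_factor_trans _ s); [apply same_factor_mul|exact st].
  - rewrite act_other by exact st. apply reduced_push; [exact Rw|exact st].
Qed.

Lemma act_reduced_cons s w : reduced (s :: w) -> act s w = s :: w.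
Proof.
  intros (Ns & Ps & _). rewrite act_precedes by exact Ps. apply push_nontrivial, Ns.
Qed.

Lemma act_trivial s w : ~ syl_nontrivial s -> reduced w -> act s w = w.
Proof.
  intros Ns Rw. destruct w as [|t w']; [apply push_trivial, Ns|].
  destruct (same_factor_dec s t) as [st|st].
  - rewrite act_same, syl_mul_trivial_l by assumption.
    apply push_nontrivial, Rw.
  - rewrite act_other, push_trivial by assumption. reflexivity.
Qed.

Lemma act_mul s s' w : same_factor s s' -> reduced w ->
  act s (act s' w) = act (syl_mul s s') w.
Proof.
  intros ss' Rw.
  assert (Hss' : same_factor (syl_mul s s') s') by
    (apply (same_factor_trans _ s); [apply same_factor_mul|exact ss']).
  destruct w as [|t w'].
  - unfold act at 2. destruct (classic (syl_nontrivial s')) as [Ns'|Ns'].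
    + rewrite push_nontrivial, act_same by assumption. reflexivity.
    + rewrite push_trivial, syl_mul_trivial_r by assumption. reflexivity.
  - destruct (same_factor_dec s' t) as [s't|s't].
    + assert (Hst : same_factor s (syl_mul s' t)) by
        (apply (same_factor_trans _ s'); [exact ss'|apply same_factor_sym, same_factor_mul]).
      rewrite act_same by exact s't.
      rewrite act_same by (apply (same_factor_trans _ s'); assumption).
      rewrite <- syl_mulA by assumption.
      destruct (classic (syl_nontrivial (syl_mul s' t))) as [N|N].
      * rewrite push_nontrivial, act_same by assumption. reflexivity.
      * rewrite push_trivial, (syl_mul_trivial_r s) by assumption.
        apply act_precedes. destruct Rw as (_ & Pt & _).
        apply (syl_precedes_same_factor t); [|exact Pt].
        apply same_factor_sym, (same_factor_trans _ s'); assumption.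
    + assert (Hst : ~ same_factor (syl_mul s s') t) by
        (intro F; apply s't, (same_factor_trans _ (syl_mul s s'));
           [apply same_factor_sym|]; assumption).
      rewrite act_other, (act_other (syl_mul s s')) by assumption.
      destruct (classic (syl_nontrivial s')) as [Ns'|Ns'].
      * rewrite push_nontrivial, act_same by assumption. reflexivity.
      * assert (Hst' : ~ same_factor s t) by
          (intro F; apply s't, (same_factor_trans _ s); [apply same_factor_sym|]; assumption).
        rewrite push_trivial, syl_mul_trivial_r, act_other by assumption. reflexivity.
Qed.

Lemma reduced_cons_inv s w : reduced (s :: w) -> reduced w.
Proof. simpl; tauto. Qed.

Lemma reduced_app_l u v : reduced (u ++ v) -> reduced u.
Proof.
  induction u as [|s u IH]; simpl; [auto|]. intros (Ns & Ps & Ruv).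
  repeat split; [exact Ns| |exact (IH Ruv)].
  destruct u; simpl in *; [exact I|exact Ps].
Qed.

Lemma reduced_app_r u v : reduced (u ++ v) -> reduced v.
Proof. induction u as [|s u IH]; simpl; [auto|tauto]. Qed.

Lemma reduced_glue u s v : reduced (u ++ [s]) -> reduced (s :: v) -> reduced (u ++ s :: v).
Proof.
  induction u as [|x u IH]; simpl; [tauto|]. intros (Nx & Px & Rus) Rsv.
  repeat split; [exact Nx| |exact (IH Rus Rsv)].
  destruct u; exact Px.
Qed.

Lemma reduced_replace_last u s s' : reduced (u ++ [s]) -> same_factor s s' ->
  syl_nontrivial s' -> reduced (u ++ [s']).
Proof.
  induction u as [|x u IH]; simpl; intros Rus ss' Ns'.
  - repeat split; exact Ns'.
  - destruct Rus as (Nx & Px & Rus). repeat split; [exact Nx| |exact (IH Rus ss' Ns')].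
    destruct u as [|y u]; simpl in *; [|exact Px].
    intro F. apply Px, (same_factor_trans _ s'); [exact F|apply same_factor_sym, ss'].
Qed.

Lemma reduced_replace_middle s t t' s' : reduced [s; t; s'] -> same_factor t t' ->
  syl_nontrivial t' -> reduced [s; t'; s'].
Proof.
  intros (Ns & Pst & Nt & Pts' & Ns' & _) tt' Nt'. repeat split; try assumption.
  - intro F. apply Pst, (same_factor_trans _ t'); [exact F|apply same_factor_sym, tt'].
  - intro F. apply Pts', (same_factor_trans _ t'); assumption.
Qed.

Definition word_inv w : list syllable := rev (map syl_inv w).

Lemma word_inv_cons s w : word_inv (s :: w) = word_inv w ++ [syl_inv s].
Proof. reflexivity. Qed.

Lemma length_word_inv w : length (word_inv w) = length w.
Proof. unfold word_inv. rewrite length_rev, length_map. reflexivity. Qed.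

Lemma reduced_word_inv w : reduced w -> reduced (word_inv w).
Proof.
  induction w as [|s w IH]; intros Rw; [exact I|].
  pose proof (IH (reduced_cons_inv _ _ Rw)) as Rw'.
  rewrite word_inv_cons. destruct w as [|t w].
  - simpl. repeat split. apply syl_nontrivial_inv, Rw.
  - rewrite word_inv_cons in *. rewrite <- app_assoc. apply reduced_glue; [exact Rw'|].
    destruct Rw as (Ns & Ps & Nt & _). repeat split.
    + apply syl_nontrivial_inv, Nt.
    + intro F. apply Ps, (same_factor_trans _ (syl_inv s));
        [apply same_factor_sym, same_factor_inv|].
      apply (same_factor_trans _ (syl_inv t)); [apply same_factor_sym, F|apply same_factor_inv].
    + apply syl_nontrivial_inv, Ns.
Qed.

Definition framed s s' w : Prop := exists mid, w = s :: mid ++ [s'].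

Definition reduced_word : Type := {w : list syllable | reduced w}.

Lemma reduced_word_eq (x y : reduced_word) : proj1_sig x = proj1_sig y -> x = y.
Proof. destruct x, y; simpl; intros; subst; f_equal; apply proof_irrelevance. Qed.

Definition act_reduced s (x : reduced_word) : reduced_word :=
  exist _ (act s (proj1_sig x)) (reduced_act s _ (proj2_sig x)).

Lemma act_reduced_cancel s s' x : same_factor s s' -> ~ syl_nontrivial (syl_mul s s') ->
  act_reduced s (act_reduced s' x) = x.
Proof.
  intros ss' N. apply reduced_word_eq; simpl.
  rewrite act_mul, act_trivial by (apply proj2_sig || assumption). reflexivity.
Qed.

Definition syl_perm s : Sym reduced_word.
Proof.
  refine (@Perm _ (act_reduced s) (act_reduced (syl_inv s)) _ _); intro x.
  - apply act_reduced_cancel; [apply same_factor_inv|apply syl_mulVl].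
  - apply act_reduced_cancel; [apply same_factor_sym, same_factor_inv|apply syl_mulV].
Defined.

Lemma syl_perm_mul s t : same_factor s t -> syl_perm (syl_mul s t) = mul (syl_perm s) (syl_perm t).
Proof.
  intro st. apply perm_ext. intro x. apply reduced_word_eq; simpl.
  symmetry. apply act_mul; [exact st|apply proj2_sig].
Qed.

Lemma syl_perm_homA : is_hom (fun a : A => syl_perm (inl a)).
Proof. intros x y. apply (syl_perm_mul (inl x) (inl y)). exact I. Qed.

Lemma syl_perm_homB : is_hom (fun b : B => syl_perm (inr b)).
Proof. intros x y. apply (syl_perm_mul (inr x) (inr y)). exact I. Qed.

End ReducedWords.

Arguments syllable : clear implicits.
Arguments reduced_word : clear implicits.

Section NormalForm.
Context {A B G : group} {iA : A -> G} {iB : B -> G} (free : is_free_product iA iB).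
Implicit Types s t : syllable A B.
Implicit Types w : list (syllable A B).

Let homA := free_hom_iA free.
Let homB := free_hom_iB free.

Definition syl_eval s : G := match s with inl a => iA a | inr b => iB b end.

Fixpoint eval w : G :=
  match w with [] => one | s :: w' => mul (syl_eval s) (eval w') end.

Lemma syl_eval_trivial s : ~ syl_nontrivial s -> syl_eval s = one.
Proof. destruct s; simpl; intro E; apply NNPP in E; subst; apply hom1; assumption. Qed.

Lemma syl_eval_mul s t : same_factor s t -> syl_eval (syl_mul s t) = mul (syl_eval s) (syl_eval t).
Proof. destruct s, t; simpl; try tauto; intros _; [apply homA|apply homB]. Qed.

Lemma syl_eval_inv s : syl_eval (syl_inv s) = inv (syl_eval s).
Proof. destruct s; simpl; apply homV; assumption. Qed.

Lemma syl_eval_pow s n : syl_eval (syl_pow s n) = expn (syl_eval s) n.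
Proof. destruct s; simpl; apply hom_expn; assumption. Qed.

Lemma eval_app (u v : list (syllable A B)) : eval (u ++ v) = mul (eval u) (eval v).
Proof.
  induction u as [|s u IH]; simpl; [rewrite mul1g|rewrite IH, mulA]; reflexivity.
Qed.

Lemma eval_cons s w : eval (s :: w) = mul (syl_eval s) (eval w).
Proof. reflexivity. Qed.

Lemma eval_snoc w s : eval (w ++ [s]) = mul (eval w) (syl_eval s).
Proof. rewrite eval_app. simpl. rewrite mulg1; reflexivity. Qed.

Lemma eval_word_inv w : eval (word_inv w) = inv (eval w).
Proof.
  induction w as [|s w IH]; [symmetry; apply invg1|].
  rewrite word_inv_cons, eval_app, IH. simpl.
  rewrite mulg1, syl_eval_inv, invMg. reflexivity.
Qed.

Lemma eval_push s w : eval (push s w) = mul (syl_eval s) (eval w).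
Proof.
  unfold push. destruct excluded_middle_informative as [N|N]; [reflexivity|].
  rewrite syl_eval_trivial, mul1g by exact N. reflexivity.
Qed.

Lemma eval_act s w : eval (act s w) = mul (syl_eval s) (eval w).
Proof.
  destruct w as [|t w]; [apply eval_push|].
  destruct (same_factor_dec s t) as [st|st].
  - rewrite act_same, eval_push, syl_eval_mul, <- mulA by exact st. reflexivity.
  - rewrite act_other by exact st. apply eval_push.
Qed.

Let word_action_lift := free_product_lift free _ _ _ syl_perm_homA syl_perm_homB.

Definition word_action : G -> Sym (reduced_word A B) := proj1_sig word_action_lift.

Lemma word_action_hom : is_hom word_action.
Proof. exact (proj1 (proj2_sig word_action_lift)). Qed.

Lemma word_action_syl s : word_action (syl_eval s) = syl_perm s.
Proof.
  destruct (proj2 (proj2_sig word_action_lift)) as [HA HB].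
  destruct s; [apply HA|apply HB].
Qed.

Lemma eval_word_action g (x : reduced_word A B) :
  eval (proj1_sig (word_action g x)) = mul g (eval (proj1_sig x)).
Proof.
  revert g x. pose proof word_action_hom as hom_h.
  apply (free_product_ind free (fun g => forall x : reduced_word A B,
           eval (proj1_sig (word_action g x)) = mul g (eval (proj1_sig x)))).
  - intro x. rewrite (hom1 _ hom_h), mul1g. reflexivity.
  - intros g1 g2 IH1 IH2 x. rewrite hom_h. simpl. rewrite IH1, IH2, mulA. reflexivity.
  - intros g IH x. rewrite (homV _ hom_h). simpl.
    rewrite <- (mulKg g (eval (proj1_sig (@perm_inv (reduced_word A B) (word_action g) x)))),
      <- IH, perm_invK.
    reflexivity.
  - intros a x. change (iA a) with (syl_eval (inl a)).
    rewrite word_action_syl. apply eval_act.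
  - intros b x. change (iB b) with (syl_eval (inr b)).
    rewrite word_action_syl. apply eval_act.
Qed.

Definition nf (g : G) : list (syllable A B) :=
  proj1_sig (word_action g (exist reduced [] I)).

Lemma reduced_nf g : reduced (nf g).
Proof. unfold nf. apply proj2_sig. Qed.

Lemma eval_nf g : eval (nf g) = g.
Proof. unfold nf. rewrite eval_word_action. apply mulg1. Qed.

Lemma nf_one : nf one = [].
Proof. unfold nf. rewrite (hom1 _ word_action_hom). reflexivity. Qed.

Lemma nf_syl_mul s g : nf (mul (syl_eval s) g) = act s (nf g).
Proof. unfold nf. rewrite word_action_hom, word_action_syl. reflexivity. Qed.

Lemma nf_eval w : reduced w -> nf (eval w) = w.
Proof.
  induction w as [|s w IH]; intro Rw; [apply nf_one|].
  simpl. rewrite nf_syl_mul, IH by exact (reduced_cons_inv _ _ Rw).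
  apply act_reduced_cons, Rw.
Qed.

Lemma nf_inv g : nf (inv g) = word_inv (nf g).
Proof.
  rewrite <- (eval_nf g) at 1. rewrite <- eval_word_inv.
  apply nf_eval, reduced_word_inv, reduced_nf.
Qed.

Lemma nf_mul_app x y : reduced (nf x ++ nf y) -> nf (mul x y) = nf x ++ nf y.
Proof.
  intro R. rewrite <- (eval_nf x) at 1. rewrite <- (eval_nf y) at 1.
  rewrite <- eval_app. apply nf_eval, R.
Qed.

End NormalForm.

Section FirstSyllable.
Context {A B G : group} {iA : A -> G} {iB : B -> G} (free : is_free_product iA iB).

Let homA := free_hom_iA free.
Let homB := free_hom_iB free.
Local Notation nf := (nf free).
Local Notation eval := (@eval A B G iA iB).
Local Notation syl_eval := (@syl_eval A B G iA iB).
Implicit Types s t : syllable A B.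

Definition starts_in_A (x : G) : Prop :=
  exists (a : A) (w : list (syllable A B)), nf x = (inl a : syllable A B) :: w.

Definition head_A (w : list (syllable A B)) : A :=
  match w with inl a :: _ => a | _ => one end.

Lemma nf_iA_mul a x : nf (mul (iA a) x) = act (inl a) (nf x).
Proof. exact (nf_syl_mul free (inl a) x). Qed.

Lemma nf_iB_mul b x : nf (mul (iB b) x) = act (inr b) (nf x).
Proof. exact (nf_syl_mul free (inr b) x). Qed.

Lemma nf_syl s : nf (syl_eval s) = push s [].
Proof. rewrite <- (mulg1 (syl_eval s)), nf_syl_mul, nf_one. reflexivity. Qed.

Lemma starts_in_A_iA_mul a x : a <> inv (head_A (nf x)) -> starts_in_A (mul (iA a) x).
Proof.
  intro N. assert (N' : mul a (head_A (nf x)) <> one) by (intro E; apply N, mulg_eq1, E).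
  unfold starts_in_A. rewrite nf_iA_mul.
  destruct (nf x) as [|[a'|b'] w]; simpl in N'.
  - rewrite mulg1 in N'. rewrite act_precedes by exact I.
    rewrite push_nontrivial by exact N'. do 2 eexists; reflexivity.
  - rewrite act_same by exact I. rewrite push_nontrivial by exact N'. do 2 eexists; reflexivity.
  - rewrite mulg1 in N'. rewrite act_other by (simpl; tauto).
    rewrite push_nontrivial by exact N'. do 2 eexists; reflexivity.
Qed.

Lemma starts_in_A_iA_mul_out a x : a <> one -> ~ starts_in_A x -> starts_in_A (mul (iA a) x).
Proof.
  intros N Sx. apply starts_in_A_iA_mul.
  destruct (nf x) as [|[a'|b'] w] eqn:E; simpl; try (rewrite invg1; exact N).
  exfalso. apply Sx. exists a', w. exact E.
Qed.

Lemma starts_in_A_iB_mul b x : b <> one -> starts_in_A x -> ~ starts_in_A (mul (iB b) x).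
Proof.
  intros N [a [w E]] [a' [w' E']]. rewrite nf_iB_mul, E, act_other, push_nontrivial in E'
    by (simpl; tauto).
  discriminate.
Qed.

(* Leaving [starts_in_A] by right multiplication with [y] cancels all of [nf z]
   against a prefix of [nf y]. *)
Definition exit_points (y : G) : list G :=
  map (fun k => inv (eval (firstn k (nf y)))) (seq 0 (S (length (nf y)))).

Lemma starts_in_A_exit z y : starts_in_A z -> ~ starts_in_A (mul z y) -> In z (exit_points y).
Proof.
  intros [a [w Ez]] Sq. set (q := mul z y) in *.
  assert (Ny : nf y = word_inv (nf z) ++ nf q).
  { replace y with (mul (inv z) q) by (unfold q; apply mulKg).
    rewrite <- nf_inv. apply nf_mul_app. rewrite nf_inv.
    pose proof (reduced_word_inv _ (reduced_nf free z)) as Rz.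
    rewrite Ez, word_inv_cons in *. rewrite <- app_assoc.
    apply reduced_glue; [exact Rz|].
    repeat split; [apply (reduced_app_r _ _ Rz)| |apply reduced_nf].
    destruct (nf q) as [|[x|x] l] eqn:Eq; simpl; auto.
    intros _. apply Sq. exists x, l. exact Eq. }
  apply in_map_iff. exists (length (nf z)). split.
  - rewrite Ny, <- (length_word_inv (nf z)), firstn_app, Nat.sub_diag, firstn_O, app_nil_r,
      firstn_all.
    rewrite (eval_word_inv free), invgK. exact (eval_nf free z).
  - apply in_seq. rewrite Ny, length_app, length_word_inv. lia.
Qed.

Hypotheses (tfA : torsion_free A) (tfB : torsion_free B).

Lemma syl_nontrivial_pow s n : syl_nontrivial s -> syl_nontrivial (syl_pow s (S n)).
Proof. destruct s as [a|b]; simpl; intro N; [apply tfA|apply tfB]; exact N. Qed.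

Lemma nf_pow_cyclically_reduced c s1 u sm : nf c = s1 :: u ++ [sm] -> ~ same_factor sm s1 ->
  forall n, framed s1 sm (nf (expn c (S n))).
Proof.
  intros Hc Hs n. induction n as [|n [mid Hmid]].
  - exists u. simpl. rewrite mulg1. exact Hc.
  - exists (u ++ sm :: s1 :: mid). change (expn c (S (S n))) with (mul c (expn c (S n))).
    assert (Hcat : nf c ++ nf (expn c (S n)) = (s1 :: u) ++ sm :: s1 :: mid ++ [sm])
      by (rewrite Hc, Hmid; simpl; rewrite <- app_assoc; reflexivity).
    rewrite nf_mul_app; rewrite Hcat; [rewrite <- app_assoc; reflexivity|].
    pose proof (reduced_nf free c) as Rc. pose proof (reduced_nf free (expn c (S n))) as Rn.
    rewrite Hc in Rc. rewrite Hmid in Rn.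
    apply reduced_glue; [exact Rc|]. refine (conj _ (conj Hs Rn)).
    exact (proj1 (reduced_app_r (s1 :: u) _ Rc)).
Qed.

(* Here [c = s1 d s1^-1] with [d] cyclically reduced, ending in the merged syllable [sm s1]. *)
Lemma nf_pow_conj_merge c s1 t1 u sm : nf c = s1 :: t1 :: u ++ [sm] ->
  same_factor sm s1 -> syl_nontrivial (syl_mul sm s1) ->
  forall n, framed s1 sm (nf (expn c (S n))).
Proof.
  intros Hc ss Nm n. set (m := syl_mul sm s1) in *.
  pose proof (reduced_nf free c) as Rc. rewrite Hc in Rc.
  destruct Rc as (Ns1 & Ps1 & Rc).
  assert (Hm : same_factor sm m) by apply same_factor_sym, same_factor_mul.
  assert (Rd : reduced (t1 :: u ++ [m])) by (apply (reduced_replace_last (t1 :: u) sm); assumption).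
  assert (Hmt : ~ same_factor m t1).
  { intro F. apply Ps1, (same_factor_trans _ sm); [apply same_factor_sym, ss|].
    apply (same_factor_trans _ m); assumption. }
  set (d := eval (t1 :: u ++ [m])).
  destruct (nf_pow_cyclically_reduced d t1 u m (nf_eval free _ Rd) Hmt n) as [mid Hmid].
  exists (t1 :: mid).
  assert (Ec : c = mul (syl_eval s1) (mul d (inv (syl_eval s1)))).
  { rewrite <- (eval_nf free c). rewrite Hc. unfold d, m.
    rewrite !app_comm_cons, !eval_snoc, (syl_eval_mul free), (mulA _ (syl_eval sm)), mulgK,
      (eval_cons s1), mulA by exact ss.
    reflexivity. }
  pose proof (reduced_nf free (expn d (S n))) as Rn. rewrite Hmid in Rn.
  assert (Rw : reduced (s1 :: (t1 :: mid) ++ [sm])).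
  { refine (conj Ns1 (conj Ps1 _)).
    apply (reduced_replace_last (t1 :: mid) m); [exact Rn|apply same_factor_sym, Hm|].
    exact (proj1 (reduced_app_r (t1 :: u) _ Rc)). }
  rewrite Ec, expn_conjg, <- (eval_nf free (expn d (S n))). rewrite Hmid.
  rewrite <- (nf_eval free _ Rw). f_equal. rewrite app_comm_cons, eval_cons, !eval_snoc.
  unfold m. rewrite (syl_eval_mul free), (mulA _ (syl_eval sm)), mulgK by exact ss.
  reflexivity.
Qed.

(* Here [sm = s1^-1], so [c = s1 d s1^-1] with [d = eval v] shorter than [c]. *)
Lemma nf_pow_conj_cancel c s1 v sm : nf c = s1 :: v ++ [sm] ->
  same_factor sm s1 -> ~ syl_nontrivial (syl_mul sm s1) ->
  forall n, reduced (s1 :: nf (expn (eval v) (S n)) ++ [sm]) ->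
  nf (expn c (S n)) = s1 :: nf (expn (eval v) (S n)) ++ [sm].
Proof.
  intros Hc ss Nm n Rw.
  assert (Esm : syl_eval sm = inv (syl_eval s1)).
  { apply mulg_eq1. rewrite <- (syl_eval_mul free) by exact ss. apply (syl_eval_trivial free), Nm. }
  assert (Ec : c = mul (syl_eval s1) (mul (eval v) (inv (syl_eval s1)))).
  { rewrite <- (eval_nf free c). rewrite Hc. simpl. rewrite eval_snoc, Esm. reflexivity. }
  rewrite <- (nf_eval free _ Rw). f_equal.
  rewrite Ec, expn_conjg. simpl. rewrite eval_snoc, Esm.
  rewrite (eval_nf free). reflexivity.
Qed.

Lemma nf_pow_framed c s1 u sm : nf c = s1 :: u ++ [sm] ->
  forall n, framed s1 sm (nf (expn c (S n))).
Proof.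
  remember (length u) as k eqn:Hk. revert c s1 u sm Hk.
  induction k as [k IH] using lt_wf_ind. intros c s1 u sm Hk Hc n.
  pose proof (reduced_nf free c) as Rc. rewrite Hc in Rc.
  destruct (same_factor_dec sm s1) as [ss|ss];
    [|exact (nf_pow_cyclically_reduced c s1 u sm Hc ss n)].
  destruct u as [|t1 u];
    [destruct Rc as (_ & Ps1 & _); contradiction (Ps1 (same_factor_sym _ _ ss))|].
  destruct (classic (syl_nontrivial (syl_mul sm s1))) as [Nm|Nm];
    [exact (nf_pow_conj_merge c s1 t1 u sm Hc ss Nm n)|].
  destruct Rc as (Ns1 & Ps1 & Rc).
  assert (Rw : reduced (s1 :: nf (expn (eval (t1 :: u)) (S n)) ++ [sm])).
  { destruct u as [|tl u2 _] using rev_ind.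
    - (* powers of a single syllable are nontrivial by torsion-freeness *)
      assert (Npow : syl_nontrivial (syl_pow t1 (S n))) by apply syl_nontrivial_pow, Rc.
      replace (expn (eval [t1]) (S n)) with (eval [syl_pow t1 (S n)])
        by (simpl; rewrite !mulg1, (syl_eval_pow free); reflexivity).
      rewrite nf_eval by (repeat split; exact Npow).
      apply (reduced_replace_middle _ t1); [exact (conj Ns1 (conj Ps1 Rc))| |exact Npow].
      apply same_factor_sym, same_factor_pow.
    - assert (Rd : reduced (t1 :: u2 ++ [tl])) by exact (reduced_app_l _ _ Rc).
      assert (Rtl : reduced [tl; sm]).
      { apply (reduced_app_r (t1 :: u2)). rewrite app_comm_cons, <- app_assoc in Rc. exact Rc. }
      assert (Hlen : length u2 < k) by (rewrite Hk; simpl; rewrite length_app; simpl; lia).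
      destruct (IH _ Hlen (eval (t1 :: u2 ++ [tl])) t1 u2 tl eq_refl (nf_eval free _ Rd) n)
        as [mid Hmid].
      pose proof (reduced_nf free (expn (eval (t1 :: u2 ++ [tl])) (S n))) as Rn.
      rewrite Hmid in *.
      replace (s1 :: (t1 :: mid ++ [tl]) ++ [sm]) with ((s1 :: t1 :: mid) ++ tl :: [sm])
        by (simpl; rewrite <- app_assoc; reflexivity).
      apply reduced_glue; [exact (conj Ns1 (conj Ps1 Rn))|exact Rtl]. }
  exists (nf (expn (eval (t1 :: u)) (S n))).
  apply (nf_pow_conj_cancel c s1 (t1 :: u) sm Hc ss Nm n Rw).
Qed.

Lemma head_A_nf_pow c n : 2 <= length (nf c) -> head_A (nf (expn c (S n))) = head_A (nf c).
Proof.
  intro Hl. destruct (nf c) as [|s1 [|t u]] eqn:E; simpl in Hl; try lia.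
  destruct (exists_last (l := t :: u)) as [u' [sm Eu]]; [discriminate|].
  rewrite Eu in E. destruct (nf_pow_framed c s1 u' sm E n) as [mid ->].
  reflexivity.
Qed.

Variables (a0 : A) (b0 : B).
Hypotheses (Ha0 : a0 <> one) (Hb0 : b0 <> one).

Lemma starts_in_A_image_A a : starts_in_A (mul (mul (iA a0) (iB b0)) (iA a)).
Proof.
  rewrite <- mulA. apply starts_in_A_iA_mul.
  rewrite nf_iB_mul, (nf_syl (inl a) : nf (iA a) = _). unfold push.
  destruct excluded_middle_informative.
  - rewrite act_other, push_nontrivial by (simpl; tauto). simpl. rewrite invg1. exact Ha0.
  - rewrite act_precedes, push_nontrivial by (simpl; tauto). simpl. rewrite invg1. exact Ha0.
Qed.

Lemma starts_in_A_image_B b : starts_in_A (mul (iA a0) (iB b)).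
Proof.
  apply starts_in_A_iA_mul. rewrite (nf_syl (inr b) : nf (iB b) = _). unfold push.
  destruct excluded_middle_informative; simpl; rewrite invg1; exact Ha0.
Qed.

Lemma starts_in_A_cyclic c : exists y, forall n,
  starts_in_A (mul y (expn c n)) /\ starts_in_A (mul y (inv (expn c n))).
Proof.
  destruct (nf c) as [|s [|t u]] eqn:E.
  -     exists (iA a0). intro n.
    replace (expn c n) with (@one G) by (rewrite <- (eval_nf free c), E; symmetry; apply expn1g).
    rewrite invg1. split; apply starts_in_A_iA_mul; rewrite nf_one; simpl; rewrite invg1; exact Ha0.
  -     assert (Ec : c = syl_eval s) by (rewrite <- (eval_nf free c), E; apply mulg1).
    destruct s as [a|b]; simpl in Ec; subst c.
    + exists (mul (iA a0) (iB b0)). intro n.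
      rewrite <- (hom_expn _ homA), <- (homV _ homA). split; apply starts_in_A_image_A.
    + exists (iA a0). intro n.
      rewrite <- (hom_expn _ homB), <- (homV _ homB). split; apply starts_in_A_image_B.
  - (* the first syllable of every nontrivial power is that of [c] or of [c^-1] *)
    assert (Hc : 2 <= length (nf c)) by (rewrite E; simpl; lia).
    assert (Hc' : 2 <= length (nf (inv c))) by (rewrite nf_inv, length_word_inv; exact Hc).
    destruct (expn_infinite_order_avoid a0 (inv (head_A (nf c))) (inv (head_A (nf (inv c))))
      (tfA a0 Ha0)) as [al (N1 & N2 & N3)].
    exists (iA al). intros [|n].
    + simpl. rewrite invg1. split; apply starts_in_A_iA_mul; rewrite nf_one;
        simpl; rewrite invg1; exact N1.
    + rewrite <- expnV. split; apply starts_in_A_iA_mul; rewrite head_A_nf_pow; assumption.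
Qed.

Lemma starts_in_A_family H : free_prod_family iA iB H ->
  exists y, forall x, H x -> starts_in_A (mul y x).
Proof.
  intros [F|[F|[g F]]].
  - exists (mul (iA a0) (iB b0)). intros x Hx. apply F in Hx as [a ->]. apply starts_in_A_image_A.
  - exists (iA a0). intros x Hx. apply F in Hx as [b ->]. apply starts_in_A_image_B.
  - destruct (starts_in_A_cyclic g) as [y Hy]. exists y. intros x Hx.
    apply F in Hx as [n [-> | ->]]; apply Hy.
Qed.

Lemma iA_neq1 : iA a0 <> one.
Proof.
  intro E. pose proof (nf_syl (inl a0)) as N. simpl in N.
  rewrite E, nf_one, push_nontrivial in N by exact Ha0. discriminate.
Qed.

Lemma iB_neq1 : iB b0 <> one.
Proof.
  intro E. pose proof (nf_syl (inr b0)) as N. simpl in N.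
  rewrite E, nf_one, push_nontrivial in N by exact Hb0. discriminate.
Qed.

Variables (P : G -> Prop) (X : list G) (r : nat).
Hypothesis coneP : positive_cone P.

(* Contains [t^-1] times every point of [starts_in_A] with an [r]-neighbour outside it. *)
Definition swamp (t : G) (s : G) : Prop :=
  exists q, In q (flat_map exit_points (ball X r)) /\ s = mul (inv t) q.

Lemma swamp_boundary (t x x' : G) : starts_in_A (mul t x) -> ~ starts_in_A (mul t x') ->
  dist_le X r x x' -> swamp t x.
Proof.
  intros Sx Sx' D. exists (mul t x). split; [|symmetry; apply mulKg].
  apply in_flat_map. exists (mul (inv x) x'). split; [exact (dist_le_ball X r x x' D)|].
  apply starts_in_A_exit; [exact Sx|]. rewrite <- mulA, mulKVg. exact Sx'.
Qed.

Lemma free_product_swamp H : free_prod_family iA iB H -> exists S, negative_swamp X P H r S.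
Proof.
  intro HF.
  assert (Pne : exists p, P p) by (destruct (cone_total coneP _ iA_neq1); eauto).
  destruct (cone_upper_bound coneP (flat_map exit_points (ball X r)) Pne) as [t Ht].
  pose (Z := fun x => starts_in_A (mul t x)).
  assert (Sep : forall H1 H2, (forall x, H1 x -> Z x) -> (forall x, H2 x -> ~ Z x) ->
            r_disconnects X r (swamp t) H1 H2)
    by (intros H1 H2; apply (r_disconnects_boundary X r Z), swamp_boundary).
  exists (swamp t). split; [|split].
  - intros s [q [Iq ->]]. rewrite invMg, invgK. exact (Ht q Iq).
  - destruct (cone_translate_into coneP starts_in_A (iA a0) t Pne iA_neq1) as [z [Sz Pz]].
    { intros x Sx. rewrite <- (homV _ homA).
      split; apply starts_in_A_iA_mul_out; auto. intro E; apply Ha0, invg_eq1, E. }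
    destruct (cone_translate_into coneP (fun x => ~ starts_in_A x) (iB b0) t Pne iB_neq1)
      as [z' [Sz' Pz']].
    { intros x Sx. apply NNPP in Sx. rewrite <- (homV _ homB).
      split; apply starts_in_A_iB_mul; auto. intro E; apply Hb0, invg_eq1, E. }
    exists (mul (inv t) z), (mul (inv t) z'). do 2 (split; [assumption|]).
    apply Sep; intros x ->; unfold Z; rewrite mulKVg; assumption.
  - destruct (starts_in_A_family H HF) as [y Hy].
    exists (mul (inv t) y), (mul (inv t) (mul (iB b0) y)).
    apply Sep; intros x [h [Hh ->]]; unfold Z; rewrite mulA, mulKVg.
    + apply Hy, Hh.
    + rewrite <- mulA. apply starts_in_A_iB_mul; [exact Hb0|apply Hy, Hh].
Qed.

End FirstSyllable.

Theorem corollary5p10 (A B G : group) (iA : A -> G) (iB : B -> G) :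
  finitely_generated A -> finitely_generated B ->
  left_orderable A -> left_orderable B ->
  nontrivial A -> nontrivial B ->
  is_free_product iA iB ->
  @Hucha G (free_prod_family iA iB).
Proof.
  intros _ _ [PA coneA] [PB coneB] [a0 Ha0] [b0 Hb0] free X _ P coneP H HF r _.
  exact (free_product_swamp free (cone_torsion_free coneA) (cone_torsion_free coneB)
           a0 b0 Ha0 Hb0 P X r coneP H HF).
Qed.
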